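(* Let $X\in\tilde{\mathcal{A}}_{conv.}$ and $\lambda\in\mathbb{C}$. Then there exist a unique $Q\in\tilde{\mathcal{A}}_{conv.}$ and a unique $R\in B$ such that $X=Q(a-\lambda b)+R$ in $\tilde{\mathcal{A}}_{conv.}$.
   Context: $\widehat{\mathcal{A}}$ is the algebra of formal power series $\sum_{p,q\ge0}\gamma_{p,q}a^pb^q$ in variables $a,b$ with $ab-ba=b^2$ (the $(a,b)$-adic completion of the polynomial algebra with this relation). $\tilde{\mathcal{A}}_{conv.}\subset\widehat{\mathcal{A}}$ is the subalgebra of series with $|\gamma_{p,q}|\le C_RR^{p+q}q!$ for some $R>1$, $C_R>0$. $B=\mathbb{C}\{\{b\}\}\subset\tilde{\mathcal{A}}_{conv.}$ is the subalgebra of series $\sum c_qb^q$ with $|c_q|\le CR^qq!$ for some $C,R$. *)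

From HB Require Import structures.
From mathcomp Require Import all_boot all_order all_algebra.
From mathcomp Require Import reals.
From mathcomp.real_closed Require Import complex.
Set Implicit Arguments. Unset Strict Implicit. Unset Printing Implicit Defensive.
Import Order.TTheory GRing.Theory Num.Theory.
Local Open Scope ring_scope.
Local Open Scope complex_scope.

Section Alg.
Variable R : realType.

(* An element sum_{p,q} g p q a^p b^q of \hat A (normal ordering a^p b^q). *)
Definition series := nat -> nat -> R[i].

(* coefficient of a^(m-k) b^(n+k) in the reordering of b^n a^m:
   b^n a^m = sum_k (-1)^k C(m,k) n(n+1)...(n+k-1) a^(m-k) b^(n+k),
   a consequence of ab - ba = b^2 (i.e. b^n a = a b^n - n b^(n+1)). *)
Definition reord (n m k : nat) : R[i] :=
  (-1) ^+ k * ('C(m, k))%:R * (\prod_(i < k) (n + i))%:R.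

Definition sadd (X Y : series) : series := fun p q => X p q + Y p q.

(* product in \hat A: a^p1 b^q1 . a^p2 b^q2
   = sum_k reord q1 p2 k a^(p1+p2-k) b^(q1+k+q2); for target (p,q) we have
   p2 = p - p1 + k with p1 <= p, and q1 + q2 + k = q. *)
Definition smul (X Y : series) : series := fun p q =>
  \sum_(p1 < p.+1) \sum_(q1 < q.+1) \sum_(q2 < q.+1) \sum_(k < q.+1)
    if (q1 + q2 + k == q)%N then
      X p1 q1 * Y (p - p1 + k)%N q2 * reord q1 (p - p1 + k) k
    else 0.

Definition sa : series := fun p q => if (p == 1%N) && (q == 0%N) then 1 else 0.
Definition sb : series := fun p q => if (p == 0%N) && (q == 1%N) then 1 else 0.

Definition a_minus_lb (l : R[i]) : series := fun p q => sa p q - l * sb p q.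

Definition in_Aconv (X : series) : Prop :=
  exists (r c : R), 1 < r /\ 0 < c /\
    forall p q : nat, `|X p q| <= (c * r ^+ (p + q) * (q`!)%:R)%:C.

Definition in_B (X : series) : Prop :=
  (forall p q : nat, (0 < p)%N -> X p q = 0) /\
  exists (c r : R), forall q : nat, `|X 0%N q| <= (c * r ^+ q * (q`!)%:R)%:C.

End Alg.

From HB Require Import structures.
From mathcomp Require Import all_boot all_order all_algebra.
From mathcomp Require Import reals.
From mathcomp.real_closed Require Import complex.
From mathcomp Require Import ring lra zify.
From Stdlib Require Import FunctionalExtensionality.
Set Implicit Arguments. Unset Strict Implicit. Unset Printing Implicit Defensive.
Import Order.TTheory GRing.Theory Num.Theory Normc.
Local Open Scope ring_scope.
Local Open Scope complex_scope.

(* Since b^q a = a b^q - q b^(q+1), the coefficient of a^p b^q in Q (a - l b) is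
   Q_(p-1,q) - (q - 1 + l) Q_(p,q-1).  Hence X = Q (a - l b) + R is the triangular system
     Q_(p,q) = X_(p+1,q) + (q - 1 + l) Q_(p+1,q-1),   R_(0,q) = X_(0,q) + (q - 1 + l) Q_(0,q-1),
   which determines Q and R.  If |X_(p,q)| <= c r^(p+q) q!, induction on q gives
   |Q_(p-1,q)|, |R_(0,q)| <= c r^(p+q) (|l| + 2)^q q!, because
   (q+1)! + (q+1) (|l| + 1) q! (|l| + 2)^q <= (q+1)! (|l| + 2)^(q+1);
   so Q and R converge with radius r (|l| + 2). *)

Section PointSums.
Variable V : nmodType.

Lemma sum_ord_eq1 n a (F : nat -> V) :
  (forall i, i != a -> F i = 0) -> \sum_(i < n) F i = if (a < n)%N then F a else 0.
Proof.
move=> Fa; transitivity (\sum_(i < n | i == a :> nat) F i); last exact: big_ord1_eq.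
by rewrite [RHS]big_mkcond; apply: eq_bigr => i _; case: eqP => // /eqP /Fa.
Qed.

Lemma sum4_point n1 n2 n3 n4 (a b c d : nat) (v : V) :
  \sum_(i < n1) \sum_(j < n2) \sum_(k < n3) \sum_(m < n4)
    (if [&& i == a :> nat, j == b :> nat, k == c :> nat & m == d :> nat] then v else 0)
  = if [&& a < n1, b < n2, c < n3 & d < n4]%N then v else 0.
Proof.
(* [F] in [sum_ord_eq1] cannot be inferred through the [nat_of_ord] coercion, so the
   summand is named and each [F] given explicitly. *)
pose pt (i j k m : nat) : V := if [&& i == a, j == b, k == c & m == d]%N then v else 0.
rewrite -[LHS]/(\sum_(i < n1) \sum_(j < n2) \sum_(k < n3) \sum_(m < n4) pt i j k m).
rewrite (@sum_ord_eq1 _ a (fun i => \sum_(j < n2) \sum_(k < n3) \sum_(m < n4) pt i j k m)).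
rewrite (@sum_ord_eq1 _ b (fun j => \sum_(k < n3) \sum_(m < n4) pt a j k m)).
rewrite (@sum_ord_eq1 _ c (fun k => \sum_(m < n4) pt a b k m)) /=.
rewrite (@sum_ord_eq1 _ d (pt a b c)).
- by rewrite /pt !eqxx; case: (a < n1)%N; case: (b < n2)%N; case: (c < n3)%N.
all: by move=> x /negbTE xE; rewrite ?big1 // => *; rewrite ?big1 // => *; rewrite ?big1 // => *;
  rewrite /pt xE ?andbF.
Qed.

Lemma sum4D n1 n2 n3 n4 (F G : 'I_n1 -> 'I_n2 -> 'I_n3 -> 'I_n4 -> V) :
  \sum_(i < n1) \sum_(j < n2) \sum_(k < n3) \sum_(m < n4) (F i j k m + G i j k m) =
  \sum_(i < n1) \sum_(j < n2) \sum_(k < n3) \sum_(m < n4) F i j k m +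
  \sum_(i < n1) \sum_(j < n2) \sum_(k < n3) \sum_(m < n4) G i j k m.
Proof.
rewrite -big_split; apply: eq_bigr => i _; rewrite -big_split; apply: eq_bigr => j _.
by rewrite -big_split; apply: eq_bigr => k _; rewrite -big_split.
Qed.

End PointSums.

Section RightMultiplication.
Variable R : realType.
Implicit Types (X : series R) (l : R[i]).

Lemma smul_sb_term X p q p1 q1 q2 k : (p1 < p.+1)%N ->
  (if (q1 + q2 + k == q)%N then X p1 q1 * sb R (p - p1 + k)%N q2 * reord R q1 (p - p1 + k)%N k
   else 0)
  = if [&& p1 == p, q1 == q.-1, q2 == 1 & k == 0]%N then
      (if q is q'.+1 then X p q' else 0) else 0.
Proof.
rewrite ltnS => /subnKC <-; move: (p - p1)%N => d; rewrite addKn /sb /reord.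
case: d k q2 => [|d] [|k] [|[|q2]] /=; rewrite ?mulr0 ?mul0r ?andbF ?if_same //.
all: repeat case: ifP => ? //; try (exfalso; lia).
all: rewrite ?addn0 ?addn1 /= ?big_ord0 ?expr0 /= ?mulr1.
- by have -> : q = q1.+1 by lia.
- by have -> : q = 0%N by lia.
Qed.

Lemma smul_sa_term X p q p1 q1 q2 k : (p1 < p.+1)%N ->
  (if (q1 + q2 + k == q)%N then X p1 q1 * sa R (p - p1 + k)%N q2 * reord R q1 (p - p1 + k)%N k
   else 0)
  = (if [&& p1 == p.-1, q1 == q, q2 == 0 & k == 0]%N then
       (if p is p'.+1 then X p' q else 0) else 0)
  + (if [&& p1 == p, q1 == q.-1, q2 == 0 & k == 1]%N then - (q.-1)%:R * X p q.-1 else 0).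
Proof.
rewrite ltnS => /subnKC <-; move: (p - p1)%N => d; rewrite addKn /sa /reord.
case: d k q2 => [|[|d]] [|[|k]] [|q2] /=; rewrite ?mulr0 ?mul0r ?andbF ?if_same ?addr0 ?add0r //.
all: repeat case: ifP => ? //; try (exfalso; lia).
all: rewrite ?addn0 ?addn1 /= ?big_ord0 ?big_ord1 ?bin0 ?binn ?expr0 ?expr1 /= ?mulr1.
- by have -> : p1 = 0%N by lia.
- have -> : q1 = q.-1 by lia.
  ring.
- have -> : q = 0%N by lia.
  by rewrite /= mulr0n oppr0 mul0r.
- by congr (X _ _); lia.
Qed.

Lemma smul_sb X p q : smul X (sb R) p q = if q is q'.+1 then X p q' else 0.
Proof.
rewrite /smul.
under eq_bigr => p1 _ do under eq_bigr => q1 _ do under eq_bigr => q2 _ do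
  under eq_bigr => k _ do rewrite (smul_sb_term _ _ _ _ _ (ltn_ord p1)).
by rewrite sum4_point; case: q => [|q]; rewrite /= ?if_same // ifT //; lia.
Qed.

Lemma smul_sa X p q :
  smul X (sa R) p q = (if p is p'.+1 then X p' q else 0) - (q.-1)%:R * X p q.-1.
Proof.
rewrite /smul.
under eq_bigr => p1 _ do under eq_bigr => q1 _ do under eq_bigr => q2 _ do
  under eq_bigr => k _ do rewrite (smul_sa_term _ _ _ _ _ (ltn_ord p1)).
rewrite sum4D !sum4_point ifT; last lia.
case: q => [|q] /=; first by rewrite andbF mul0r subr0 addr0.
by rewrite ifT ?mulNr //; lia.
Qed.

Lemma smul_a_minus_lb X l p q :
  smul X (a_minus_lb l) p q = (if p is p'.+1 then X p' q else 0)
                              - (if q is q'.+1 then (q'%:R + l) * X p q' else 0).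
Proof.
have -> : smul X (a_minus_lb l) p q = smul X (sa R) p q - l * smul X (sb R) p q.
  rewrite /smul /a_minus_lb; do 4!(rewrite mulr_sumr -sumrB; apply: eq_bigr => ? _).
  by case: ifP => _; [ring | rewrite mulr0 subr0].
by rewrite smul_sa smul_sb; case: q => [|q] /=; ring.
Qed.

End RightMultiplication.

Lemma normc_le (R : rcfType) (z : R[i]) (b : R) : (`|z| <= b%:C) = (normc z <= b).
Proof. exact: lecR. Qed.

Lemma normc_ge0 (R : rcfType) (z : R[i]) : 0 <= normc z.
Proof. by case: z => a b; exact: sqrtr_ge0. Qed.

Lemma le_normc_natD (R : rcfType) (n : nat) (z : R[i]) :
  normc (n%:R + z) <= n.+1%:R * (normc z + 1).
Proof.
apply: le_trans (le_normcD _ _) _; rewrite normcMn normc1 -natr1.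
have := normc_ge0 z; have : 0 <= n%:R :> R by []; nra.
Qed.

Lemma series_ext (R : realType) (X Y : series R) : (forall p q, X p q = Y p q) -> X = Y.
Proof.
by move=> XY; apply: functional_extensionality => p; apply: functional_extensionality.
Qed.

Section Division.
Variables (R : realType) (X : series R) (l : R[i]).

Fixpoint div_coef (p q : nat) {struct q} : R[i] :=
  if q is q'.+1 then X p q + (q'%:R + l) * div_coef p.+1 q' else X p 0.

Definition quot_series : series R := fun p q => div_coef p.+1 q.

Definition rem_series : series R := fun p q => if p is 0 then div_coef 0 q else 0.

Section Bound.
Variables c r : R.
Hypotheses (c_ge0 : 0 <= c) (r_ge0 : 0 <= r).
Hypothesis X_bound : forall p q, normc (X p q) <= c * r ^+ (p + q) * q`!%:R.

Lemma div_coef_bound p q :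
  normc (div_coef p q) <= c * r ^+ (p + q) * (normc l + 2) ^+ q * q`!%:R.
Proof.
elim: q p => [|q IHq] p /=; first by rewrite expr0 mulr1; exact: X_bound.
set M := normc l + 2; set K := c * r ^+ (p + q.+1) * q`!%:R.
have K_ge0 : 0 <= K by rewrite !mulr_ge0 ?exprn_ge0.
have T_ge1 : 1 <= M ^+ q by rewrite exprn_ege1 // /M; have := normc_ge0 l; lra.
have hX : normc (X p q.+1) <= K * q.+1%:R by rewrite /K -mulrA -natrM mulnC -factS.
have hf : normc (div_coef p.+1 q) <= K * M ^+ q.
  by apply: le_trans (IHq _) _; rewrite addSnnS /K mulrAC.
have hlq := le_normc_natD q l.
have hlf : normc (q%:R + l) * normc (div_coef p.+1 q) <= q.+1%:R * (normc l + 1) * (K * M ^+ q).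
  by apply: ler_pM; rewrite ?normc_ge0.
have slack : 0 <= K * q.+1%:R * (M ^+ q - 1) by rewrite mulr_ge0 ?subr_ge0 // mulr_ge0.
have -> : c * r ^+ (p + q.+1) * M ^+ q.+1 * (q.+1)`!%:R = K * q.+1%:R * (M * M ^+ q).
  by rewrite /K factS natrM exprS; ring.
apply: le_trans (le_normcD _ _) _; rewrite normcM /M; lra.
Qed.

End Bound.

Lemma quot_rem_eq : X = sadd (smul quot_series (a_minus_lb l)) rem_series.
Proof.
apply: series_ext => p q; rewrite /sadd smul_a_minus_lb /quot_series /rem_series.
by case: p => [|p]; case: q => [|q] /=; ring.
Qed.

Lemma quot_rem_unique Q Rm : (forall p q, (0 < p)%N -> Rm p q = 0) ->
  X = sadd (smul Q (a_minus_lb l)) Rm -> Q = quot_series /\ Rm = rem_series.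
Proof.
move=> Rm0 XE.
have XQ p q : X p.+1 q = Q p q - (if q is q'.+1 then (q'%:R + l) * Q p.+1 q' else 0).
  by rewrite {1}XE /sadd smul_a_minus_lb Rm0 // addr0.
have QE : Q = quot_series.
  apply: series_ext => p q; rewrite /quot_series; elim: q p => [|q IHq] p /=.
    by rewrite XQ subr0.
  by rewrite XQ IHq; ring.
split=> //; apply: series_ext => p q.
have := congr1 (fun Y => Y p q) (etrans (esym XE) quot_rem_eq).
by rewrite /sadd /= QE => /addrI.
Qed.

Lemma div_coef_bound_Aconv : in_Aconv X -> exists c r : R, [/\ 0 < c, 1 < r &
  forall p q, normc (div_coef p q) <= c * r ^+ (p + q) * (normc l + 2) ^+ q * q`!%:R].
Proof.
move=> [r [c [r_gt1 [c_gt0 hX]]]]; exists c, r; split=> //.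
apply: div_coef_bound; rewrite ?ltW //; first exact: lt_trans r_gt1.
by move=> p q; rewrite -normc_le.
Qed.

Lemma quot_in_Aconv : in_Aconv X -> in_Aconv quot_series.
Proof.
move=> /div_coef_bound_Aconv [c [r [c_gt0 r_gt1 B]]].
set M := normc l + 2; have M_ge1 : 1 <= M by rewrite /M; have := normc_ge0 l; lra.
exists (r * M), (c * r); split; first by nra.
split=> [|p q]; first by apply: mulr_gt0; lra.
rewrite normc_le /quot_series; apply: le_trans (B _ _) _; rewrite -/M addSn exprS exprMn.
have K_ge0 : 0 <= c * r * r ^+ (p + q) * q`!%:R by rewrite !mulr_ge0 ?exprn_ge0 //; lra.
have := ler_wpM2l K_ge0 (ler_weXn2l M_ge1 (leq_addl p q)); lra.
Qed.

Lemma rem_in_B : in_Aconv X -> in_B rem_series.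
Proof.
move=> /div_coef_bound_Aconv [c [r [_ _ B]]]; split=> [[|p] q //=|].
exists c, (r * (normc l + 2)) => q; rewrite normc_le; apply: le_trans (B _ _) _.
by rewrite add0n exprMn mulrA lexx.
Qed.

End Division.

Theorem proposition1p2p3 (R : realType) (X : series R) (l : R[i]) :
  in_Aconv X ->
  exists Q Rm : series R,
    [/\ in_Aconv Q, in_B Rm, X = sadd (smul Q (a_minus_lb l)) Rm &
     forall Q' Rm' : series R, in_Aconv Q' -> in_B Rm' ->
       X = sadd (smul Q' (a_minus_lb l)) Rm' -> Q' = Q /\ Rm' = Rm].
Proof.
move=> X_conv; exists (quot_series X l), (rem_series X l); split.
- exact: quot_in_Aconv.
- exact: rem_in_B.
- exact: quot_rem_eq.
- by move=> Q' Rm' _ [Rm'0 _]; exact: quot_rem_unique.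
Qed.
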